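(* For $n\ge1$ let $\overline{P}_n$ be the group presented by \[ P_{n}=\Big\langle\, x_{\eta}\ \big(\eta \in \textstyle\bigcup_{i=0}^{n-1} \{0,1\}^{i}\big)\ \Big|\ x_{\eta}^{3}=e\ \ \forall \eta \in \{0,1\}^{n-1},\quad x_{\eta 0}x_{\eta 1}=x_{\eta}^{3}\ \ \forall \eta \in \textstyle\bigcup_{i=0}^{n-2} \{0,1\}^{i}\,\Big\rangle, \] and let $G=\overline{P}_1*\overline{P}_2*\overline{P}_3*\cdots$ be the free product of all of them. Then $G/\mathrm{Tor}_1(G)\cong G$, and consequently $\mathrm{TorLen}(G)=\infty$.
   Context: $\{0,1\}^i$ denotes the set of binary strings of length exactly $i$, with $\{0,1\}^0=\{\emptyset\}$; $\eta0,\eta1$ denote strings obtained by appending a digit on the right. For a group $G$, define $\mathrm{Tor}_0(G)=\{e\}$ and inductively $\mathrm{Tor}_{i+1}(G)$ to be the normal closure in $G$ of $\{g\in G : g\,\mathrm{Tor}_i(G)\text{ has finite order in } G/\mathrm{Tor}_i(G)\}$; set $\mathrm{Tor}_\infty(G)=\bigcup_{i}\mathrm{Tor}_i(G)$. The torsion length $\mathrm{TorLen}(G)$ is the smallest $n\ge 0$ with $\mathrm{Tor}_n(G)=\mathrm{Tor}_\infty(G)$, and $\infty$ if no such $n$ exists. *)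

From mathcomp Require Import all_boot.
Set Implicit Arguments. Unset Strict Implicit. Unset Printing Implicit Defensive.

Record Grp := {
  carrier :> Type;
  gmul : carrier -> carrier -> carrier;
  ginv : carrier -> carrier;
  gone : carrier;
  gmulA : forall x y z, gmul x (gmul y z) = gmul (gmul x y) z;
  gmul1l : forall x, gmul gone x = x;
  gmul1r : forall x, gmul x gone = x;
  gmulVl : forall x, gmul (ginv x) x = gone;
  gmulVr : forall x, gmul x (ginv x) = gone
}.

Arguments gmul {g}. Arguments ginv {g}. Arguments gone {g}.

Definition gpow (G : Grp) (x : G) (k : nat) : G := iter k (gmul x) gone.

Definition is_hom (G H : Grp) (f : G -> H) : Prop :=
  forall x y, f (gmul x y) = gmul (f x) (f y).

Definition normal_subgroup (G : Grp) (N : G -> Prop) : Prop :=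
  [/\ N gone,
      (forall x y, N x -> N y -> N (gmul x y)),
      (forall x, N x -> N (ginv x)) &
      (forall x g, N x -> N (gmul (ginv g) (gmul x g)))].

Definition normal_closure (G : Grp) (S : G -> Prop) : G -> Prop :=
  fun x => forall N : G -> Prop, normal_subgroup N ->
             (forall s, S s -> N s) -> N x.

(* Tor_0 = {e}; Tor_{i+1} = normal closure of {g | g Tor_i has finite order
   in G / Tor_i}, i.e. of {g | exists k >= 1, g^k \in Tor_i}. *)
Fixpoint Tor {G : Grp} (i : nat) : G -> Prop :=
  match i with
  | 0 => fun x => x = gone
  | i'.+1 => normal_closure (fun g : G => exists k, 0 < k /\ Tor i' (gpow g k))
  end.

Definition Tor_inf (G : Grp) : G -> Prop := fun x => exists i, @Tor G i x.

Definition TorLen_infinite (G : Grp) : Prop :=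
  forall n : nat, ~ (forall x : G, @Tor G n x <-> @Tor_inf G x).

(* Generators of G = free product of the P_n (n >= 1): x_{n,eta} with
   0 < n and size eta <= n - 1.  A family x : nat -> seq bool -> H is
   only looked at on valid indices.  eta0, eta1 = rcons eta false/true. *)
Definition valid_index (n : nat) (eta : seq bool) : Prop := 0 < n /\ size eta < n.

Definition satisfies_rels (H : Grp) (x : nat -> seq bool -> H) : Prop :=
  (forall n eta, 0 < n -> size eta = n.-1 -> gpow (x n eta) 3 = gone) /\
  (forall n eta, size eta + 2 <= n ->
     gmul (x n (rcons eta false)) (x n (rcons eta true)) = gpow (x n eta) 3).

(* (G, g) is the group presented by these generators and relations, i.e.
   the free product of all the presented groups P_n-bar (universal property). *)
Definition is_free_product_of_Pbar (G : Grp) (g : nat -> seq bool -> G) : Prop :=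
  satisfies_rels g /\
  forall (H : Grp) (h : nat -> seq bool -> H), satisfies_rels h ->
    (exists f : G -> H, is_hom f /\ forall n eta, valid_index n eta -> f (g n eta) = h n eta) /\
    (forall f1 f2 : G -> H, is_hom f1 -> is_hom f2 ->
       (forall n eta, valid_index n eta -> f1 (g n eta) = h n eta) ->
       (forall n eta, valid_index n eta -> f2 (g n eta) = h n eta) ->
       forall y, f1 y = f2 y).

(* G / N is isomorphic to H  iff  there is a surjective hom G -> H with kernel N
   (first isomorphism theorem, used to avoid quotient types). *)
Definition quotient_iso (G : Grp) (N : G -> Prop) (H : Grp) : Prop :=
  exists f : G -> H, [/\ is_hom f, (forall y, exists x, f x = y) &
                        (forall x, f x = gone <-> N x)].

From mathcomp Require Import all_boot zify.
From Stdlib Require Import Classical ClassicalEpsilon FunctionalExtensionality.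
From Stdlib Require Import PropExtensionality ProofIrrelevance.
Set Implicit Arguments. Unset Strict Implicit. Unset Printing Implicit Defensive.

(* The shift [x_(n, eta) -> x_(n-1, eta)], which kills the leaves
   ([size eta = n - 1]), is an epimorphism [f : G -> G].  For [m > 0] the group
   [P_(m+1)] is the amalgam of the infinite cyclic group generated by its root
   [x] with the free product of its two subtrees (each a copy of [P_m]) over
   [x^3 = x_0 x_1], and [G] is the union of the free products [P_1 * ... * P_M].
   As a torsion element of an amalgam is conjugate into a factor, induction puts
   every torsion element into [ker f]; conversely modulo the leaves, which have
   order 3, the shift [x_(n, eta) -> x_(n+1, eta)] inverts [f].  So
   [ker f = Tor_1(G)] and [G / Tor_1(G)] is isomorphic to [G]; along this
   isomorphism [Tor_(i+1)(G)] is the preimage of [Tor_i(G)], so [Tor_n = Tor_(n+1)]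
   would give [Tor_1 = Tor_0], which a leaf refutes.  Normal forms in the amalgams
   come from van der Waerden's permutation representation. *)

Section GroupFacts.
Variable G : Grp.
Implicit Types x y z : G.

Lemma mulKg x y : gmul (ginv x) (gmul x y) = y.
Proof. by rewrite gmulA gmulVl gmul1l. Qed.
Lemma mulKVg x y : gmul x (gmul (ginv x) y) = y.
Proof. by rewrite gmulA gmulVr gmul1l. Qed.
Lemma mulgK x y : gmul (gmul y x) (ginv x) = y.
Proof. by rewrite -gmulA gmulVr gmul1r. Qed.
Lemma mulgKV x y : gmul (gmul y (ginv x)) x = y.
Proof. by rewrite -gmulA gmulVl gmul1r. Qed.
Lemma mulgI x : injective (gmul x).
Proof. by move=> y z e; rewrite -(mulKg x y) e mulKg. Qed.
Lemma mulIg x : injective (gmul^~ x).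
Proof. by move=> y z e; rewrite -(mulgK x y) /= e mulgK. Qed.
Lemma mulg_eq1 x y : gmul x y = gone -> y = ginv x.
Proof. by move=> e; apply: (@mulgI x); rewrite e gmulVr. Qed.
Lemma invgK x : ginv (ginv x) = x.
Proof. by symmetry; apply: mulg_eq1; rewrite gmulVl. Qed.
Lemma invMg x y : ginv (gmul x y) = gmul (ginv y) (ginv x).
Proof. by symmetry; apply: mulg_eq1; rewrite -gmulA mulKVg gmulVr. Qed.
Lemma invg1 : ginv (@gone G) = gone.
Proof. by symmetry; apply: mulg_eq1; rewrite gmul1l. Qed.
Lemma invg_eq1 x : ginv x = gone -> x = gone.
Proof. by move=> e; rewrite -(invgK x) e invg1. Qed.
Lemma mulg_idem x : gmul x x = x -> x = gone.
Proof. by move=> e; apply: (@mulgI x); rewrite e gmul1r. Qed.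

Lemma gpowS x k : gpow x k.+1 = gmul x (gpow x k).
Proof. by []. Qed.
Lemma gpowD x a b : gpow x (a + b) = gmul (gpow x a) (gpow x b).
Proof. by elim: a => [|a IH]; rewrite ?gmul1l // addSn !gpowS IH gmulA. Qed.
Lemma gpowSr x k : gpow x k.+1 = gmul (gpow x k) x.
Proof. by rewrite -addn1 gpowD /gpow /= gmul1r. Qed.
Lemma gpowM x a b : gpow x (a * b) = gpow (gpow x a) b.
Proof. by elim: b => [|b IH]; rewrite ?muln0 // mulnS gpowD IH. Qed.
Lemma gpow1g k : gpow (@gone G) k = gone.
Proof. by elim: k => // k IH; rewrite gpowS IH gmul1l. Qed.
Lemma gpowJ c y k :
  gpow (gmul (ginv c) (gmul y c)) k = gmul (ginv c) (gmul (gpow y k) c).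
Proof.
elim: k => [|k IH]; first by rewrite gmul1l gmulVl.
by rewrite !gpowS IH !gmulA mulgK -!gmulA.
Qed.
Lemma gpowV x k : gpow (ginv x) k = ginv (gpow x k).
Proof. by elim: k => [|k IH]; rewrite ?invg1 // gpowS gpowSr invMg IH. Qed.

Lemma gpowJ_eq1 c y k :
  gpow (gmul (ginv c) (gmul y c)) k = gone -> gpow y k = gone.
Proof.
rewrite gpowJ => e; apply: (@mulgI (ginv c)); apply: (@mulIg c).
by rewrite /= -gmulA e gmul1r gmulVl.
Qed.
End GroupFacts.

Definition torsion (G : Grp) (y : G) := exists2 k, 0 < k & gpow y k = gone.

Section Homomorphisms.
Variables (G H : Grp) (f : G -> H).
Hypothesis hf : is_hom f.

Lemma hom1 : f gone = gone.
Proof. by apply: mulg_idem; rewrite -hf gmul1l. Qed.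
Lemma homV x : f (ginv x) = ginv (f x).
Proof. by apply: mulg_eq1; rewrite -hf gmulVr hom1. Qed.
Lemma homX x k : f (gpow x k) = gpow (f x) k.
Proof. by elim: k => [|k IH]; rewrite ?hom1 // !gpowS hf IH. Qed.
Lemma homJ x c : f (gmul (ginv c) (gmul x c)) = gmul (ginv (f c)) (gmul (f x) (f c)).
Proof. by rewrite !hf homV. Qed.
End Homomorphisms.

Lemma hom_comp (G H K : Grp) (f : G -> H) (h : H -> K) :
  is_hom f -> is_hom h -> is_hom (fun x => h (f x)).
Proof. by move=> hf hh x y; rewrite hf hh. Qed.

Definition is_subgroup (G : Grp) (S : G -> Prop) :=
  [/\ S gone, (forall x y, S x -> S y -> S (gmul x y)) & (forall x, S x -> S (ginv x))].

Inductive gen (G : Grp) (S : G -> Prop) : G -> Prop :=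
| gen_in x : S x -> gen S x
| gen_one : gen S gone
| gen_mul x y : gen S x -> gen S y -> gen S (gmul x y)
| gen_inv x : gen S x -> gen S (ginv x).

Section SubgroupFacts.
Variables (G : Grp) (S : G -> Prop).
Hypothesis HS : is_subgroup S.
Lemma subgroup1 : S gone. Proof. by case: HS. Qed.
Lemma subgroupM x y : S x -> S y -> S (gmul x y). Proof. by case: HS => _ h _; apply: h. Qed.
Lemma subgroupV x : S x -> S (ginv x). Proof. by case: HS => _ _ h; apply: h. Qed.
Lemma subgroup_cancel_l x y : S x -> S (gmul x y) -> S y.
Proof. by move=> Sx Sxy; rewrite -(mulKg x y); apply: subgroupM (subgroupV Sx) Sxy. Qed.
Lemma subgroup_cancel_r x y : S y -> S (gmul x y) -> S x.
Proof. by move=> Sy Sxy; rewrite -(mulgK y x); apply: subgroupM Sxy (subgroupV Sy). Qed.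
Lemma subgroup_gpow x k : S x -> S (gpow x k).
Proof. by move=> Sx; elim: k => [|k IH]; [exact: subgroup1 | exact: subgroupM]. Qed.
End SubgroupFacts.

Section Generation.
Variable G : Grp.
Implicit Types S T : G -> Prop.

Lemma gen_subgroup S : is_subgroup (gen S).
Proof. by split; [exact: gen_one | exact: gen_mul | exact: gen_inv]. Qed.

Lemma gen_min S T : is_subgroup T -> (forall x, S x -> T x) -> forall x, gen S x -> T x.
Proof. by move=> [T1 TM TV] ST x; elim=> *; auto. Qed.

Lemma gen_mono S T : (forall x, S x -> T x) -> forall x, gen S x -> gen T x.
Proof. by move=> ST; apply: gen_min; [exact: gen_subgroup | move=> x /ST /gen_in]. Qed.

Lemma hom_eq_on_gen (H : Grp) S T (phi psi : G -> H) :
  is_subgroup T -> (forall x, gen S x -> T x) -> is_hom phi ->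
  (forall x y, T x -> T y -> psi (gmul x y) = gmul (psi x) (psi y)) ->
  (forall x, S x -> phi x = psi x) -> forall x, gen S x -> phi x = psi x.
Proof.
move=> [T1 TM TV] ST hphi hpsi agr.
have psi1 : psi gone = gone by apply: mulg_idem; rewrite -hpsi // gmul1l.
have psiV x : T x -> psi (ginv x) = ginv (psi x).
  by move=> Tx; apply: mulg_eq1; rewrite -hpsi ?gmulVr //; auto.
move=> z; elim=> [x /agr //| |x y gx IHx gy IHy|x gx IH].
- by rewrite (hom1 hphi) psi1.
- by rewrite hphi hpsi ?IHx ?IHy //; apply: ST.
- by rewrite (homV hphi) psiV ?IH //; apply: ST.
Qed.

Lemma hom_trivial_on_gen (H : Grp) S (phi : G -> H) : is_hom phi ->
  (forall x, S x -> phi x = gone) -> forall x, gen S x -> phi x = gone.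
Proof.
move=> hp hS z; elim=> [x /hS //||x y _ h1 _ h2|x _ h].
- exact: hom1.
- by rewrite hp h1 h2 gmul1l.
- by rewrite (homV hp) h invg1.
Qed.

Lemma gen_image (H : Grp) (S : H -> Prop) S' (phi : G -> H) :
  is_hom phi -> (forall s, S s -> exists s', S' s' /\ phi s' = s) ->
  forall y, gen S y -> exists y', gen S' y' /\ phi y' = y.
Proof.
move=> hp hS y; elim=> [x /hS [s' [h1 h2]]| |x z _ [x' [g1 e1]] _ [z' [g2 e2]]|x _ [x' [gx e]]].
- by exists s'; split => //; apply: gen_in.
- by exists gone; split; [exact: gen_one | exact: hom1].
- by exists (gmul x' z'); split; [exact: gen_mul | rewrite hp e1 e2].
- by exists (ginv x'); split; [exact: gen_inv | rewrite (homV hp) e].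
Qed.

Lemma gen1_gpow (x y : G) : gen (eq^~ x) y ->
  exists n, y = gpow x n \/ y = ginv (gpow x n).
Proof.
have pow_sub a d : gmul (gpow x (d + a)) (ginv (gpow x a)) = gpow x d.
  by rewrite gpowD mulgK.
have pow_sub' a d : gmul (gpow x a) (ginv (gpow x (d + a))) = ginv (gpow x d).
  by rewrite gpowD invMg gmulA gmulVr gmul1l.
elim=> [z ->| |a b _ [n1 [e1|e1]] _ [n2 [e2|e2]]|z _ [n [e|e]]].
- by exists 1; left; rewrite /gpow /= gmul1r.
- by exists 0; left.
- by exists (n1 + n2); left; rewrite e1 e2 gpowD.
- subst; case: (leqP n2 n1) => h.
    by exists (n1 - n2); left; rewrite -{1}(subnK h) pow_sub.
  by exists (n2 - n1); right; rewrite -{1}(subnK (ltnW h)) pow_sub'.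
- subst; case: (leqP n1 n2) => h.
    by exists (n2 - n1); left; rewrite -{1}(subnK h) addnC gpowD mulKg.
  exists (n1 - n2); right.
  by rewrite -{1}(subnK (ltnW h)) addnC gpowD invMg -gmulA gmulVl gmul1r.
- by exists (n1 + n2); right; rewrite e1 e2 -invMg -gpowD addnC.
- by exists n; right; rewrite e.
- by exists n; left; rewrite e invgK.
Qed.
End Generation.

Lemma sig_ext (T : Type) (P : T -> Prop) (a b : {x : T | P x}) :
  proj1_sig a = proj1_sig b -> a = b.
Proof. by case: a b => [a pa] [b pb] /= e; subst b; rewrite (proof_irrelevance _ pa pb). Qed.

Section Permutations.
Variable X : Type.

Record perm := Perm { pf : X -> X; pg : X -> X;
  pfK : forall x, pf (pg x) = x; pgK : forall x, pg (pf x) = x }.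

Lemma perm_ext (p q : perm) : (forall x, pf p x = pf q x) -> p = q.
Proof.
case: p => f1 g1 fg1 gf1; case: q => f2 g2 fg2 gf2 /= /functional_extensionality ef.
subst f2; have eg : g1 = g2.
  by apply: functional_extensionality => x; rewrite -{1}(fg2 x) gf1.
subst g2; by rewrite (proof_irrelevance _ fg1 fg2) (proof_irrelevance _ gf1 gf2).
Qed.

Definition pmul (p q : perm) : perm.
Proof.
refine (@Perm (fun x => pf p (pf q x)) (fun x => pg q (pg p x)) _ _).
- by move=> x; rewrite !pfK.
- by move=> x; rewrite !pgK.
Defined.
Definition pinv (p : perm) : perm := Perm (pgK p) (pfK p).
Definition pone : perm := @Perm id id (fun _ => erefl) (fun _ => erefl).

Definition Sym : Grp.
Proof.
refine (@Build_Grp perm pmul pinv pone _ _ _ _ _); move=> *; apply: perm_ext => //= x.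
- by rewrite pgK.
- by rewrite pfK.
Defined.
End Permutations.
Arguments pf {X}.

Inductive Z3 := T0 | T1 | T2.

Section CubeRoots.
Variable X : Type.

Definition lift (p : Sym X) : Sym (X * Z3).
Proof.
refine (@Perm _ (fun w => (pf p w.1, w.2)) (fun w => (pg p w.1, w.2)) _ _).
- by move=> [x j] /=; rewrite pfK.
- by move=> [x j] /=; rewrite pgK.
Defined.

Lemma lift_hom : is_hom lift.
Proof. by move=> p q; apply: perm_ext => -[x j]. Qed.

Definition croot (p : Sym X) : Sym (X * Z3).
Proof.
refine (@Perm _
  (fun w => match w with (x, T0) => (x, T1) | (x, T1) => (x, T2) | (x, T2) => (pf p x, T0) end)
  (fun w => match w with (x, T0) => (pg p x, T2) | (x, T1) => (x, T0) | (x, T2) => (x, T1) end)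
  _ _).
- by move=> [x []] //=; rewrite pfK.
- by move=> [x []] //=; rewrite pgK.
Defined.

Lemma croot3 p : gpow (croot p) 3 = lift p.
Proof. by apply: perm_ext => -[x []]. Qed.
End CubeRoots.

Definition rot3 : Sym Z3 :=
  @Perm Z3 (fun j => match j with T0 => T1 | T1 => T2 | T2 => T0 end)
           (fun j => match j with T0 => T2 | T1 => T0 | T2 => T1 end)
           (fun j => match j with T0 => erefl | T1 => erefl | T2 => erefl end)
           (fun j => match j with T0 => erefl | T1 => erefl | T2 => erefl end).

Lemma rot3_order : gpow rot3 3 = gone.
Proof. by apply: perm_ext => -[]. Qed.
Lemma rot3_neq1 : rot3 <> gone.
Proof. by move/(f_equal (fun p => pf p T0)). Qed.

Definition regular (G : Grp) (y : G) : Sym G := Perm (mulKVg y) (mulKg y).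

Lemma regular_hom (G : Grp) : is_hom (@regular G).
Proof. by move=> x y; apply: perm_ext => z /=; rewrite gmulA. Qed.

Section SubgroupAsGroup.
Variables (G : Grp) (S : G -> Prop).
Hypothesis HS : is_subgroup S.

Definition subgroup_grp : Grp.
Proof.
refine (@Build_Grp {x : G | S x}
  (fun a b => exist _ (gmul (proj1_sig a) (proj1_sig b))
                (subgroupM HS (proj2_sig a) (proj2_sig b)))
  (fun a => exist _ (ginv (proj1_sig a)) (subgroupV HS (proj2_sig a)))
  (exist _ gone (subgroup1 HS)) _ _ _ _ _); move=> *; apply: sig_ext => /=.
- exact: gmulA.
- exact: gmul1l.
- exact: gmul1r.
- exact: gmulVl.
- exact: gmulVr.
Defined.

Lemma subgroup_grp_val_gpow (a : subgroup_grp) k :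
  proj1_sig (gpow a k) = gpow (proj1_sig a) k.
Proof. by elim: k => //= k ->. Qed.
End SubgroupAsGroup.

Definition wprod (G : Grp) (L : seq (bool * G)) : G :=
  foldr (fun p acc => gmul p.2 acc) gone L.

Lemma wprod_cat (G : Grp) (L1 L2 : seq (bool * G)) :
  wprod (L1 ++ L2) = gmul (wprod L1) (wprod L2).
Proof. by elim: L1 => [|p L IH] /=; rewrite ?gmul1l // IH gmulA. Qed.

Lemma wprod_rcons (G : Grp) (L : seq (bool * G)) q :
  wprod (rcons L q) = gmul (wprod L) q.2.
Proof. by rewrite -cats1 wprod_cat /= gmul1r. Qed.

Definition winv (G : Grp) (L : seq (bool * G)) := rev (map (fun p => (p.1, ginv p.2)) L).

Lemma wprod_winv (G : Grp) (L : seq (bool * G)) : wprod (winv L) = ginv (wprod L).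
Proof.
elim: L => [|p L IH]; first by rewrite /= invg1.
by rewrite /winv /= rev_cons wprod_rcons -/(winv L) IH /= invMg.
Qed.

Definition wpow (G : Grp) (L : seq (bool * G)) k := flatten (nseq k L).

Lemma wprod_wpow (G : Grp) (L : seq (bool * G)) k : wprod (wpow L k) = gpow (wprod L) k.
Proof. by elim: k => //= k IH; rewrite wprod_cat IH. Qed.

Definition tag_neq (G : Grp) : rel (bool * G) := fun p q => p.1 != q.1.

Lemma Forall_cat T (P : T -> Prop) (s1 s2 : seq T) :
  List.Forall P (s1 ++ s2) <-> List.Forall P s1 /\ List.Forall P s2.
Proof.
elim: s1 => [|x s1 IH] /=; first by split=> // -[].
split; first by move/List.Forall_cons_iff => [Px /IH [h1 h2]]; split => //; constructor.
by move=> [/List.Forall_cons_iff [Px h1] h2]; constructor => //; apply/IH.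
Qed.

(* Words over two subgroups [A], [B] amalgamating a common subgroup [C]; a letter
   is tagged [false] for [A] and [true] for [B]. *)
Section Amalgam.
Variables (G : Grp) (A B C : G -> Prop).
Hypotheses (HA : is_subgroup A) (HB : is_subgroup B) (HC : is_subgroup C).
Hypotheses (CA : forall x, C x -> A x) (CB : forall x, C x -> B x).

Definition factor (s : bool) := if s then B else A.

Lemma factor_subgroup s : is_subgroup (factor s). Proof. by case: s. Qed.
Lemma core_factor s x : C x -> factor s x. Proof. by case: s => /=; auto. Qed.

Definition letter (p : bool * G) := factor p.1 p.2 /\ ~ C p.2.
Definition reduced (L : seq (bool * G)) := sorted (@tag_neq G) L /\ List.Forall letter L.
Definition normal_form := forall L, L <> [::] -> reduced L -> ~ C (wprod L).
Definition conj_into_factor (h : G) :=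
  exists c z, (A z \/ B z) /\ h = gmul (ginv c) (gmul z c).

Lemma reduced_mul_head y t l L : reduced ((t, l) :: L) -> factor t y ->
  ~ C (gmul y l) -> reduced ((t, gmul y l) :: L).
Proof.
move=> [sL /List.Forall_cons_iff [[/= Al _] FL]] Ay nC.
split; first by case: L sL FL.
by constructor => //; split => //; exact: (subgroupM (factor_subgroup t) Ay Al).
Qed.

Lemma reduced_mul_head_core y t l L : reduced ((t, l) :: L) -> C y ->
  reduced ((t, gmul y l) :: L).
Proof.
move=> rL Cy; apply: reduced_mul_head (core_factor t Cy) _ => //.
by case: rL => _ /List.Forall_cons_iff [[_ nCl] _] /(subgroup_cancel_l HC Cy).
Qed.

Lemma reduced_cons s x L : factor s x -> L <> [::] -> reduced L ->
  C (gmul x (wprod L)) \/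
  exists L', [/\ L' <> [::], size L' <= (size L).+1, reduced L'
                & gmul x (wprod L) = wprod L'].
Proof.
case: L => [//|[s' l] L] Ax _ rL.
have [sL /List.Forall_cons_iff [[/= Al nCl] FL]] := rL.
case: (classic (C x)) => Cx.
  right; exists ((s', gmul x l) :: L); split => //; last by rewrite /= gmulA.
  exact: reduced_mul_head_core.
case: (eqVneq s' s) => [es|nes]; last first.
  right; exists ((s, x) :: (s', l) :: L); split => //; split => //.
  - by rewrite /= {1}/tag_neq /= eq_sym nes /=.
  - by constructor; [split | constructor; first split].
subst s'; case: (classic (C (gmul x l))) => Cxl; last first.
  right; exists ((s, gmul x l) :: L); split => //; last by rewrite /= gmulA.
  exact: reduced_mul_head.
case: L sL FL {rL} => [|[s2 l2] L] sL FL; first by left; rewrite /= gmul1r.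
right; exists ((s2, gmul (gmul x l) l2) :: L); split => //; last by rewrite /= !gmulA.
- by rewrite /=; lia.
- by apply: reduced_mul_head_core Cxl; split; [exact: path_sorted sL | ].
Qed.

Lemma reduce L : List.Forall (fun p => factor p.1 p.2) L ->
  C (wprod L) \/ exists L', [/\ L' <> [::], reduced L' & wprod L = wprod L'].
Proof.
elim: L => [|[s x] L IH] /=; first by left; exact: (subgroup1 HC).
move/List.Forall_cons_iff => /= [Ax /IH [CL|[L' [nL' rL' ->]]]].
  have Axl : factor s (gmul x (wprod L)).
    exact: (subgroupM (factor_subgroup s) Ax (core_factor s CL)).
  case: (classic (C (gmul x (wprod L)))) => CxL; first by left.
  right; exists [:: (s, gmul x (wprod L))]; split => //; last by rewrite /= gmul1r.
  by split => //; constructor.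
case: (reduced_cons Ax nL' rL') => [|[L'' [nL'' _ rL'' eL'']]]; first by left.
by right; exists L''.
Qed.

Lemma gen_word S : (forall x, S x -> A x \/ B x) -> forall y, gen S y ->
  exists2 L, List.Forall (fun p => factor p.1 p.2) L & y = wprod L.
Proof.
move=> SAB y; elim=> [x /SAB [Ax|Bx]| |x z _ [L1 F1 ->] _ [L2 F2 ->]|x _ [L F ->]].
- by exists [:: (false, x)]; [constructor | rewrite /= gmul1r].
- by exists [:: (true, x)]; [constructor | rewrite /= gmul1r].
- by exists [::].
- by exists (L1 ++ L2); [apply/Forall_cat | rewrite wprod_cat].
- exists (winv L); last by rewrite wprod_winv.
  elim: L F => [|p L IH] //= /List.Forall_cons_iff [Ap FL].
  rewrite /winv /= rev_cons -cats1; apply/Forall_cat; split; first exact: IH.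
  by constructor => //; apply: (subgroupV (factor_subgroup p.1)).
Qed.

Hypothesis NF : normal_form.

Lemma cyclically_reduced_gpow_neq1 p M q : reduced (p :: rcons M q) -> q.1 != p.1 ->
  forall k, 0 < k -> gpow (wprod (p :: rcons M q)) k <> gone.
Proof.
move=> [sL FL] ne [//|k] _ e.
have rpow j : reduced (wpow (p :: rcons M q) j.+1).
  elim: j => [|j [sj Fj]]; first by rewrite /wpow /= cats0.
  split; last by apply/Forall_cat.
  rewrite /wpow /= -/(wpow _ _) cat_path; apply/andP; split; first exact: sL.
  by move: sj; rewrite /wpow /= -/(wpow _ _) => ->; rewrite last_rcons /= {1}/tag_neq ne.
by apply: (NF _ (rpow k)) => //; rewrite wprod_wpow e; exact: (subgroup1 HC).
Qed.

(* A reduced word whose first and last letters lie in the same factor is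
   conjugated by its last letter into a shorter reduced word. *)
Lemma reduced_torsion_conj n L : size L <= n -> L <> [::] -> reduced L ->
  conj_into_factor (wprod L) \/ (forall k, 0 < k -> gpow (wprod L) k <> gone).
Proof.
elim: n L => [|n IH] [|p L1] // sz _ rL.
case/lastP: L1 sz rL => [|M q] sz rL.
  left; exists gone, p.2; split; last by rewrite invg1 gmul1l /= !gmul1r.
  by case: rL => _ /List.Forall_cons_iff [[]]; case: (p.1); auto.
case: (eqVneq q.1 p.1) => [eqp|neq]; last by right; apply: cyclically_reduced_gpow_neq1.
have [sL FL] := rL.
case: M sz sL FL {rL} => [|m M] sz sL FL.
  by move: sL => /= /andP []; rewrite /tag_neq eqp eqxx.
move: FL => /List.Forall_cons_iff [[Ap _] FL].
move: FL; rewrite -cats1 Forall_cat => -[FM /List.Forall_cons_iff [[Aq _] _]].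
set y := gmul q.2 p.2.
have Ay : factor p.1 y by rewrite /y; apply: (subgroupM (factor_subgroup p.1)) Ap; rewrite -eqp.
have rM : reduced (m :: M).
  split => //; by move: sL; rewrite /= rcons_path => /andP [_ /andP []].
have eL : wprod (p :: rcons (m :: M) q) = gmul (ginv q.2) (gmul (gmul y (wprod (m :: M))) q.2).
  by rewrite /= wprod_rcons /y /= -!gmulA mulKg.
have nM : m :: M <> [::] by [].
rewrite cats1 eL; case: (reduced_cons Ay nM rM) => [Cy|[L' [nL' szL' rL' eL']]].
  left; exists q.2, (gmul y (wprod (m :: M))); split => //; left; exact: CA.
have IHL' := IH L'; rewrite -eL' in IHL'.
case: IHL' => // [|[c [z [Az ez]]]|nt].
- by move: sz szL'; rewrite /= size_rcons; lia.
- left; exists (gmul c q.2), z; split => //.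
  by rewrite ez invMg -!gmulA.
- by right => k k0 /gpowJ_eq1; apply: nt.
Qed.

Theorem torsion_conj_into_factor L : List.Forall (fun p => factor p.1 p.2) L ->
  forall k, 0 < k -> gpow (wprod L) k = gone -> conj_into_factor (wprod L).
Proof.
move=> FL k k0 e; case: (reduce FL) => [CL|[L' [nL' rL' eL']]].
  by exists gone, (wprod L); split; [left; exact: CA | rewrite invg1 gmul1l gmul1r].
rewrite eL' in e *.
by case: (reduced_torsion_conj (leqnn _) nL' rL') => // /(_ k k0 e).
Qed.

Theorem torsion_gen_conj S : (forall x, S x -> A x \/ B x) -> forall y, gen S y ->
  torsion y -> exists c z, [/\ A z \/ B z, torsion z & y = gmul (ginv c) (gmul z c)].
Proof.
move=> SAB y /(gen_word SAB) [L FL ->] [k k0 e].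
have [c [z [ABz ez]]] := torsion_conj_into_factor FL k0 e.
exists c, z; split => //; exists k => //.
by apply: (@gpowJ_eq1 _ c); rewrite -ez.
Qed.
End Amalgam.

Definition decide (P : Prop) : bool := if excluded_middle_informative P then true else false.

Lemma decideP (P : Prop) : reflect P (decide P).
Proof. by rewrite /decide; case: excluded_middle_informative => h; constructor. Qed.

(* The van der Waerden construction: the normal forms [c t_1 ... t_n] (c in [C], the
   [t_i] chosen coset representatives from alternating factors) carry an action of
   each factor, agreeing on [C]. *)
Section VanDerWaerden.
Variables (G : Grp) (A B C : G -> Prop).
Hypotheses (HA : is_subgroup A) (HB : is_subgroup B) (HC : is_subgroup C).
Hypotheses (CA : forall x, C x -> A x) (CB : forall x, C x -> B x).
Local Notation factor := (factor A B).
Local Notation reduced := (reduced A B C).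
Let factorM s x y : factor s x -> factor s y -> factor s (gmul x y) :=
  @subgroupM G _ (factor_subgroup HA HB s) x y.
Let factor_core s x : C x -> factor s x := @core_factor G A B C CA CB s x.

(* A representative of the coset [C x] in [factor s], chosen as [1] for [C] itself. *)
Definition crep (s : bool) (x : G) : G :=
  epsilon (inhabits gone) (fun t => factor s t /\ C (gmul x (ginv t)) /\ (C x -> t = gone)).

Lemma crepP s x : factor s x ->
  [/\ factor s (crep s x), C (gmul x (ginv (crep s x))) & (C x -> crep s x = gone)].
Proof.
move=> Ax; suff [? [? ?]] : factor s (crep s x) /\ C (gmul x (ginv (crep s x))) /\
                            (C x -> crep s x = gone) by [].
apply: (epsilon_spec (inhabits gone)
  (fun t => factor s t /\ C (gmul x (ginv t)) /\ (C x -> t = gone))).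
case: (classic (C x)) => Cx.
  by exists gone; rewrite invg1 gmul1r; split => //; apply: (subgroup1 (factor_subgroup HA HB s)).
by exists x; rewrite gmulVr; split => //; split => //; apply: (subgroup1 HC).
Qed.

Lemma crep_core s x : C x -> crep s x = gone.
Proof. by move=> Cx; case: (crepP (factor_core s Cx)) => _ _ ->. Qed.

Lemma crep_mul_core s c x : C c -> crep s (gmul c x) = crep s x.
Proof.
move=> Cc; rewrite /crep; congr epsilon; apply: functional_extensionality => t.
apply: propositional_extensionality; rewrite -gmulA.
split=> -[At [Cxt Cx1]]; split => //; split.
- exact: (subgroup_cancel_l HC Cc Cxt).
- by move=> Cx; apply: Cx1; apply: (subgroupM HC Cc Cx).
- exact: (subgroupM HC Cc Cxt).
- by move=> Ccx; apply: Cx1; apply: (subgroup_cancel_l HC Cc Ccx).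
Qed.

Lemma crep_eq1 s x : factor s x -> crep s x = gone -> C x.
Proof. by move=> /crepP [_ h _] e; rewrite e invg1 gmul1r in h. Qed.

Lemma crep_idem s x : factor s x -> crep s (crep s x) = crep s x.
Proof.
move=> /crepP [_ h _].
by rewrite -{2}(mulgKV (crep s x) x) crep_mul_core.
Qed.

Definition nf_state := (G * seq (bool * G))%type.

Definition nf_letter (p : bool * G) := [/\ factor p.1 p.2, crep p.1 p.2 = p.2 & p.2 <> gone].
Definition nf_valid (st : nf_state) :=
  [/\ C st.1, sorted (@tag_neq G) st.2 & List.Forall nf_letter st.2].

(* [head_part s c w] is the part of the element [c * wprod w] lying in [factor s]
   before the first letter of the other factor, and [tail_part s w] the rest. *)
Definition head_part s (c : G) (w : seq (bool * G)) : G :=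
  if w is (s', t) :: _ then (if s' == s then gmul c t else c) else c.
Definition tail_part s (w : seq (bool * G)) :=
  if w is (s', t) :: w' then (if s' == s then w' else w) else [::].

Definition normalize s (u : G) (tl : seq (bool * G)) : nf_state :=
  (gmul u (ginv (crep s u)), if decide (crep s u = gone) then tl else (s, crep s u) :: tl).

Definition nf_act s (a : G) (st : nf_state) : nf_state :=
  normalize s (gmul a (head_part s st.1 st.2)) (tail_part s st.2).

Definition head_tag_neq s (w : seq (bool * G)) := if w is p :: _ then p.1 != s else True.

Lemma tail_part_head s w : sorted (@tag_neq G) w -> head_tag_neq s (tail_part s w).
Proof.
case: w => [|[s' t] [|[s2 t2] w]] //=; case: (eqVneq s' s) => //= -> /andP [].
by rewrite /tag_neq /= eq_sym.
Qed.

Lemma tail_part_sorted s w : sorted (@tag_neq G) w -> sorted (@tag_neq G) (tail_part s w).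
Proof. by case: w => [|[s' t] w] //=; case: ifP => // _; apply: path_sorted. Qed.

Lemma tail_part_letters s w : List.Forall nf_letter w -> List.Forall nf_letter (tail_part s w).
Proof. by case: w => [|[s' t] w] //= F; case: ifP => // _; case/List.Forall_cons_iff: F. Qed.

Lemma tail_part_id s w : head_tag_neq s w -> tail_part s w = w.
Proof. by case: w => [|[s' t] w] //= /negbTE ->. Qed.

Lemma head_part_id s c w : head_tag_neq s w -> head_part s c w = c.
Proof. by case: w => [|[s' t] w] //= /negbTE ->. Qed.

Lemma head_part_factor s st : nf_valid st -> factor s (head_part s st.1 st.2).
Proof.
case: st => c [|[s' t] w] [/= Cc _ F]; first exact: factor_core.
case: eqP => [<-|_]; last exact: factor_core.
by case/List.Forall_cons_iff: F => -[/= At _ _] _; apply: factorM (factor_core _ Cc) At.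
Qed.

Lemma normalize_valid s u tl : factor s u -> sorted (@tag_neq G) tl ->
  head_tag_neq s tl -> List.Forall nf_letter tl -> nf_valid (normalize s u tl).
Proof.
move=> Au stl htl Ftl; case: (crepP Au) => Ar Cr _.
rewrite /normalize; case: decideP => [er|ner]; split => //=.
- by case: tl stl htl {Ftl} => //= p tl' ->; rewrite /tag_neq /= eq_sym => ->.
- by constructor => //; split => //; apply: crep_idem.
Qed.

Lemma nf_act_valid s a st : nf_valid st -> factor s a -> nf_valid (nf_act s a st).
Proof.
move=> vs Aa; have [_ sw Fw] := vs; apply: normalize_valid.
- exact: factorM Aa (head_part_factor s vs).
- exact: tail_part_sorted.
- exact: tail_part_head.
- exact: tail_part_letters.
Qed.

Lemma nf_act_parts s a st : nf_valid st -> factor s a ->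
  head_part s (nf_act s a st).1 (nf_act s a st).2 = gmul a (head_part s st.1 st.2) /\
  tail_part s (nf_act s a st).2 = tail_part s st.2.
Proof.
move=> [_ sw _] Aa; have hd := tail_part_head s sw.
rewrite /nf_act /normalize /=; case: decideP => [er|ner] /=.
  by rewrite head_part_id // tail_part_id // er invg1 gmul1r.
by rewrite eqxx mulgKV.
Qed.

Lemma nf_actM s a b st : nf_valid st -> factor s a -> factor s b ->
  nf_act s (gmul a b) st = nf_act s a (nf_act s b st).
Proof.
move=> vs Aa Ab; rewrite {2}/nf_act; case: (nf_act_parts vs Ab) => -> ->.
by rewrite /nf_act gmulA.
Qed.

Lemma nf_act1 s st : nf_valid st -> nf_act s gone st = st.
Proof.
case: st => c w [/= Cc sw Fw]; rewrite /nf_act /normalize /= gmul1l.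
case: w sw Fw => [|[s' t] w] sw Fw /=.
  by rewrite crep_core // invg1 gmul1r; case: decideP.
case: (eqVneq s' s) => [<-|ne].
  case/List.Forall_cons_iff: Fw => -[/= At rt nt] _.
  by rewrite crep_mul_core // rt mulgK; case: decideP.
by rewrite crep_core // invg1 gmul1r; case: decideP.
Qed.

Lemma nf_act_core c st : C c -> nf_valid st -> nf_act false c st = nf_act true c st.
Proof.
case: st => c0 w Cc [/= Cc0 sw Fw].
have Ccc : C (gmul c c0) by apply: (subgroupM HC Cc Cc0).
rewrite /nf_act /normalize /=.
case: w sw Fw => [|[s' t] w] sw Fw /=; first by rewrite !crep_core //; case: decideP.
case/List.Forall_cons_iff: Fw => -[/= At rt nt] _.
by case: s' sw At rt nt => sw At rt nt /=; rewrite (crep_core _ Ccc) gmulA crep_mul_core // rt;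
  do 2 case: decideP => //= ?; rewrite ?mulgK ?invg1 ?gmul1r.
Qed.

Lemma nf_act_cons s a c w : nf_valid (c, w) -> head_tag_neq s w -> factor s a -> ~ C a ->
  exists c' r, nf_act s a (c, w) = (c', (s, r) :: w).
Proof.
move=> [/= Cc _ _] hw Aa nCa.
rewrite /nf_act /normalize /= head_part_id // tail_part_id //.
case: decideP => [er|ner]; last by do 2 eexists.
case: nCa; apply: (subgroup_cancel_r HC Cc); apply: (crep_eq1 (s := s)) er.
exact: factorM Aa (factor_core s Cc).
Qed.

Definition nf_space := {st : nf_state | nf_valid st}.

Definition nf_act_sp s a (Aa : factor s a) (v : nf_space) : nf_space :=
  exist _ (nf_act s a (proj1_sig v)) (nf_act_valid (proj2_sig v) Aa).

Lemma nf_act_spK s a (Aa : factor s a) (Ai : factor s (ginv a)) v :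
  nf_act_sp Aa (nf_act_sp Ai v) = v.
Proof. by case: v => st vs; apply: sig_ext; rewrite /= -nf_actM // gmulVr nf_act1. Qed.

Lemma nf_act_spVK s a (Aa : factor s a) (Ai : factor s (ginv a)) v :
  nf_act_sp Ai (nf_act_sp Aa v) = v.
Proof. by case: v => st vs; apply: sig_ext; rewrite /= -nf_actM // gmulVl nf_act1. Qed.

(* Elements outside [factor s] act trivially; only the restriction matters. *)
Definition nf_perm (s : bool) (a : G) : Sym nf_space :=
  match excluded_middle_informative (factor s a) with
  | left Aa => let Ai := subgroupV (factor_subgroup HA HB s) Aa in
               Perm (nf_act_spK Aa Ai) (nf_act_spVK Aa Ai)
  | right _ => pone nf_space
  end.

Lemma nf_perm_val s a v : factor s a ->
  proj1_sig (pf (nf_perm s a) v) = nf_act s a (proj1_sig v).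
Proof. by rewrite /nf_perm; case: excluded_middle_informative. Qed.

Lemma nf_permM s a b : factor s a -> factor s b ->
  nf_perm s (gmul a b) = gmul (nf_perm s a) (nf_perm s b).
Proof.
move=> Aa Ab; apply: perm_ext => v; apply: sig_ext => /=.
by rewrite !nf_perm_val ?nf_actM //; [exact: proj2_sig | exact: factorM].
Qed.

Lemma nf_perm1 s : nf_perm s gone = gone.
Proof.
apply: perm_ext => v; apply: sig_ext => /=.
rewrite nf_perm_val ?nf_act1 //; [exact: proj2_sig | exact: factor_core (subgroup1 HC)].
Qed.

Lemma nf_permX s a k : factor s a -> nf_perm s (gpow a k) = gpow (nf_perm s a) k.
Proof.
move=> Aa; elim: k => [|k IH]; first exact: nf_perm1.
by rewrite !gpowS nf_permM ?IH //; apply: (subgroup_gpow (factor_subgroup HA HB s)).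
Qed.

Lemma nf_perm_core c : C c -> nf_perm false c = nf_perm true c.
Proof.
move=> Cc; apply: perm_ext => v; apply: sig_ext.
rewrite !nf_perm_val ?nf_act_core //; [exact: proj2_sig | exact: CB | exact: CA].
Qed.

Definition nf_run (L : seq (bool * G)) : nf_state :=
  foldr (fun p st => nf_act p.1 p.2 st) (gone, [::]) L.

Lemma nf_run_valid L : List.Forall (fun p => factor p.1 p.2) L -> nf_valid (nf_run L).
Proof.
elim: L => [|p L IH] /=; first by split => //; apply: (subgroup1 HC).
by case/List.Forall_cons_iff => Ap /IH; move/nf_act_valid; apply.
Qed.

Lemma reduced_factors L : reduced L -> List.Forall (fun p => factor p.1 p.2) L.
Proof. by case=> _; apply: List.Forall_impl => p []. Qed.

Lemma nf_run_tags L : reduced L -> map fst (nf_run L).2 = map fst L.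
Proof.
elim: L => [//|[s a] L IH] rL.
change (map fst (nf_act s a (nf_run L)).2 = s :: map fst L).
have [sL /List.Forall_cons_iff [[Aa nCa] FL]] := rL.
have rL' : reduced L by split => //; exact: path_sorted sL.
have vw := nf_run_valid (reduced_factors rL').
have hw : head_tag_neq s (nf_run L).2.
  move: (IH rL') sL; case: (nf_run L).2 => [|p w]; case: L {IH rL rL' FL vw} => [|q L] //= [-> _].
  by case/andP; rewrite /tag_neq eq_sym.
have [c' [r ->]] : exists c' r, nf_act s a (nf_run L) = (c', (s, r) :: (nf_run L).2).
  by move: vw hw; case: (nf_run L) => c w vw hw; apply: nf_act_cons.
by rewrite /= IH.
Qed.

Lemma hom_eq_nf_perm_on_gen (H : Grp) (k : Sym nf_space -> H) (phi : G -> H) s S :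
  is_hom k -> is_hom phi -> (forall x, gen S x -> factor s x) ->
  (forall x, S x -> phi x = k (nf_perm s x)) -> forall x, gen S x -> phi x = k (nf_perm s x).
Proof.
move=> hk hphi SA; apply: (hom_eq_on_gen (factor_subgroup HA HB s) SA hphi).
by move=> x y Ax Ay; rewrite nf_permM // hk.
Qed.

Section ActionModel.
Variables (X : Type) (rho : G -> Sym X) (i : nf_space -> X).
Hypotheses (i_inj : injective i) (rho_hom : is_hom rho).
Hypothesis rho_factor : forall s a v, factor s a -> pf (rho a) (i v) = i (pf (nf_perm s a) v).

Let v0 : nf_space := exist _ (nf_run [::]) (nf_run_valid (List.Forall_nil _)).

Lemma rho_wprod L (FL : List.Forall (fun p => factor p.1 p.2) L) :
  pf (rho (wprod L)) (i v0) = i (exist _ (nf_run L) (nf_run_valid FL)).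
Proof.
elim: L FL => [|[s a] L IH] FL /=.
  rewrite (rho_factor v0 (factor_core false (subgroup1 HC))) nf_perm1.
  by congr i; apply: sig_ext.
case/List.Forall_cons_iff: (FL) => Aa FL'.
rewrite rho_hom /= (IH FL') (rho_factor _ Aa).
by congr i; apply: sig_ext; rewrite nf_perm_val.
Qed.

Theorem normal_form_of_action : normal_form A B C.
Proof.
move=> L nL rL CL; have FL := reduced_factors rL.
have AL : factor false (wprod L) by apply: CA.
have := rho_wprod FL; rewrite (rho_factor _ AL) => /i_inj /(f_equal (@proj1_sig _ _)).
rewrite nf_perm_val //= => /(f_equal (fun st => map fst st.2)).
rewrite nf_run_tags // /nf_act /normalize /= gmul1r crep_core //.
by case: decideP => // _; case: L nL {rL CL FL AL}.
Qed.
End ActionModel.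
End VanDerWaerden.

Definition sibling (eta : seq bool) : seq bool :=
  if rev eta is b :: r then rcons (rev r) (~~ b) else [::].

Lemma sibling_rcons eta b : sibling (rcons eta b) = rcons eta (~~ b).
Proof. by rewrite /sibling rev_rcons revK. Qed.

Lemma sibling_eq_rcons x eta b : sibling x = rcons eta b -> x = rcons eta (~~ b).
Proof.
case/lastP: x => [|x c]; first by rewrite /sibling; case: eta.
by rewrite sibling_rcons => /eqP; rewrite eqseq_rcons => /andP [/eqP -> /eqP <-]; rewrite negbK.
Qed.

Definition rot_family n0 eta0 (n : nat) (eta : seq bool) : Sym Z3 :=
  if (n == n0) && (eta == eta0) then rot3
  else if [&& n == n0, eta == sibling eta0 & eta0 != [::]] then ginv rot3 else gone.

Lemma rot_family_rels n0 eta0 : satisfies_rels (rot_family n0 eta0).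
Proof.
have cube n eta : gpow (rot_family n0 eta0 n eta) 3 = gone.
  rewrite /rot_family; case: ifP => _; first exact: rot3_order.
  by case: ifP => _; rewrite ?gpowV ?rot3_order ?invg1 ?gpow1g.
split => [n eta _ _|n eta _]; first exact: cube.
rewrite cube /rot_family; case: (eqVneq n n0) => [_|_] /=; last by apply: perm_ext.
have rcons_nil b : (rcons eta b != [::]) = true by rewrite -size_eq0 size_rcons.
case: (eqVneq (rcons eta false) eta0) => [h0|nh0].
  by rewrite -h0 sibling_rcons !eqseq_rcons !eqxx rcons_nil /=; apply: perm_ext => -[].
case: (eqVneq (rcons eta true) eta0) => [h1|nh1].
  by rewrite -h1 sibling_rcons !eqseq_rcons !eqxx rcons_nil /=; apply: perm_ext => -[].
have sib_neq b : (rcons eta b == sibling eta0) = false.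
  apply/negbTE/eqP => /esym/sibling_eq_rcons e.
  by case: b e => e; [move: nh0 | move: nh1]; rewrite e eqxx.
by rewrite !sib_neq /=; apply: perm_ext.
Qed.

Section Presentation.
Variables (G : Grp) (g : nat -> seq bool -> G).
Hypothesis HP : is_free_product_of_Pbar g.

Lemma g_leaf3 n eta : 0 < n -> size eta = n.-1 -> gpow (g n eta) 3 = gone.
Proof. by case: HP => [[h _] _]; apply: h. Qed.

Lemma g_split n eta : size eta + 2 <= n ->
  gmul (g n (rcons eta false)) (g n (rcons eta true)) = gpow (g n eta) 3.
Proof. by case: HP => [[_ h] _]; apply: h. Qed.

Lemma hom_of_rels (H : Grp) (h : nat -> seq bool -> H) : satisfies_rels h ->
  exists f : G -> H, is_hom f /\ forall n eta, valid_index n eta -> f (g n eta) = h n eta.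
Proof. by case: HP => _ U /U []. Qed.

Lemma hom_eq_on_gens (H : Grp) (f1 f2 : G -> H) : is_hom f1 -> is_hom f2 ->
  (forall n eta, valid_index n eta -> f1 (g n eta) = f2 (g n eta)) -> forall y, f1 y = f2 y.
Proof.
move=> h1 h2 e y.
have rels : satisfies_rels (fun n eta => f1 (g n eta)).
  split => [n eta n0 sz|n eta sz]; first by rewrite -(homX h1) g_leaf3 // (hom1 h1).
  by rewrite -h1 g_split // (homX h1).
case: HP => _ /(_ H _ rels) [_ U].
by apply: U => // n eta v; rewrite e.
Qed.

Definition gens (x : G) := exists n eta, valid_index n eta /\ x = g n eta.

Lemma gen_gens y : gen gens y.
Proof.
pose S := subgroup_grp (gen_subgroup gens).
pose h n eta : S := match excluded_middle_informative (valid_index n eta) with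
  | left v => exist _ (g n eta) (gen_in (ex_intro _ n (ex_intro _ eta (conj v erefl))))
  | right _ => gone end.
have hv n eta : valid_index n eta -> proj1_sig (h n eta) = g n eta.
  by rewrite /h => v; case: excluded_middle_informative.
have rels : satisfies_rels h.
  split => [n eta n0 sz|n eta sz]; apply: sig_ext; rewrite subgroup_grp_val_gpow.
    by rewrite hv ?g_leaf3 //; split => //; lia.
  by rewrite /= !hv ?g_split // /valid_index ?size_rcons; split; lia.
have [s [hs es]] := hom_of_rels rels.
have -> : y = proj1_sig (s y).
  apply: (@hom_eq_on_gens G id (fun x => proj1_sig (s x))) => //.
  - by move=> a b; rewrite hs.
  - by move=> n eta v; rewrite es // hv.
exact: proj2_sig.
Qed.

Lemma g_neq1 n0 eta0 : valid_index n0 eta0 -> g n0 eta0 <> gone.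
Proof.
move=> v e; have [phi [hphi ephi]] := hom_of_rels (rot_family_rels n0 eta0).
apply: rot3_neq1; have := ephi _ _ v.
by rewrite e (hom1 hphi) /rot_family !eqxx.
Qed.

Definition down_gen n eta := if size eta + 1 < n then g n.-1 eta else gone.

Lemma down_hom_exists : exists f : G -> G, is_hom f /\
  forall n eta, valid_index n eta -> f (g n eta) = down_gen n eta.
Proof.
apply: hom_of_rels; split => [n eta n0 sz|n eta sz]; rewrite /down_gen.
  by rewrite ifF ?gpow1g //; apply/negbTE; lia.
have parent : size eta + 1 < n by lia.
rewrite !size_rcons (ifT _ _ parent); case: (ltnP (size eta).+2 n) => h.
  have child : (size eta).+1 + 1 < n by lia.
  by rewrite !(ifT _ _ child) g_split //; lia.
have child : ((size eta).+1 + 1 < n) = false by lia.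
by rewrite !(ifF _ _ child) gmul1l g_leaf3 //; lia.
Qed.

Definition Pgens m (x : G) := exists zeta, size zeta < m /\ x = g m zeta.

Lemma Pgens_g m eta : size eta < m -> gen (Pgens m) (g m eta).
Proof. by move=> h; apply: gen_in; exists eta. Qed.

Definition subtree_gen m b k zeta := if k == m then g m.+1 (b :: zeta) else gone.

Lemma subtree_hom_exists m b : exists sh : G -> G, is_hom sh /\
  forall k zeta, valid_index k zeta -> sh (g k zeta) = subtree_gen m b k zeta.
Proof.
apply: hom_of_rels; split => [k zeta k0 sz|k zeta sz]; rewrite /subtree_gen.
  by case: eqP => [ek|_]; rewrite ?gpow1g // g_leaf3 //= sz ek; lia.
case: eqP => [ek|_]; last by rewrite gmul1l gpow1g.
by rewrite -!rcons_cons g_split //=; lia.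
Qed.

(* Composed with a subtree map, this representation becomes the faithful
   [y |-> lift (regular y)] on [P_m], which makes subtree maps injective. *)
Definition subtree_rep m b n zeta : Sym (G * Z3) :=
  if n == m.+1 then
    if zeta is c :: z then (if c == b then lift (regular (g m z)) else gone)
    else croot (regular (g m [::]))
  else gone.

Lemma lift_regularX (x : G) k : gpow (lift (regular x)) k = lift (regular (gpow x k)).
Proof. by rewrite (homX (@regular_hom G)) (homX (@lift_hom G)). Qed.

Lemma subtree_rep_rels m b : 0 < m -> satisfies_rels (subtree_rep m b).
Proof.
move=> m0; rewrite /subtree_rep; split => [n zeta n0 sz|n zeta sz].
  case: eqP => [en|_]; last exact: gpow1g.
  case: zeta sz => [|c z] sz; first by move: sz; rewrite en /=; lia.
  case: eqP => _; last exact: gpow1g.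
  rewrite lift_regularX g_leaf3 //; last by move: sz; rewrite en /=; lia.
  by rewrite (hom1 (@regular_hom G)) (hom1 (@lift_hom G)).
case: eqP => [en|_]; last by rewrite gmul1l gpow1g.
case: zeta sz => [|c z] sz; first by case: (b); apply: perm_ext => -[y []].
rewrite !rcons_cons; case: eqP => _; last by rewrite gmul1l gpow1g.
by rewrite -(@lift_hom G) -(@regular_hom G) lift_regularX g_split //; move: sz; rewrite en /=; lia.
Qed.

Lemma subtree_hom_injective m b (sh : G -> G) : 0 < m -> is_hom sh ->
  (forall k zeta, valid_index k zeta -> sh (g k zeta) = subtree_gen m b k zeta) ->
  forall y, gen (Pgens m) y -> sh y = gone -> y = gone.
Proof.
move=> m0 hsh esh; have [r [hr er]] := hom_of_rels (subtree_rep_rels b m0).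
have r_sh : forall y, gen (Pgens m) y -> r (sh y) = lift (regular y).
  apply: (@hom_eq_on_gen _ _ _ (fun _ => True) (fun y => r (sh y)) (fun y => lift (regular y))) => //.
  - exact: hom_comp hsh hr.
  - by move=> x z _ _; rewrite (@regular_hom G) (@lift_hom G).
  move=> x [zeta [sz ->]]; rewrite esh; last by split => //; lia.
  by rewrite /subtree_gen eqxx er ?/subtree_rep ?eqxx //; split => /=; lia.
move=> y Py e; have := r_sh y Py; rewrite e (hom1 hr).
by move/(f_equal (fun p => pf p (gone, T0))) => /= [] /esym; rewrite gmul1r.
Qed.
End Presentation.

Definition trivial (G : Grp) (x : G) := x = gone.

Lemma trivial_subgroup (G : Grp) : is_subgroup (@trivial G).
Proof. by split => [|x y -> ->|x ->]; rewrite /trivial ?gmul1l ?invg1. Qed.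

Lemma trivial_gen (G : Grp) (S : G -> Prop) x : trivial x -> gen S x.
Proof. by move=> ->; apply: gen_one. Qed.

Section RootAmalgam.
Variables (G : Grp) (g : nat -> seq bool -> G).
Hypothesis HP : is_free_product_of_Pbar g.
Variable m : nat.
Hypothesis m0 : 0 < m.

Definition root_cyclic := gen (eq^~ (g m.+1 [::])).
Definition branches := gen (fun y => exists zeta, 0 < size zeta <= m /\ y = g m.+1 zeta).
Definition root_cube := gen (eq^~ (gpow (g m.+1 [::]) 3)).
Definition subtree b := gen (fun y => exists z, size z < m /\ y = g m.+1 (b :: z)).

Lemma branches_g zeta : 0 < size zeta <= m -> branches (g m.+1 zeta).
Proof. by move=> h; apply: gen_in; exists zeta. Qed.

Lemma subtree_g b z : size z < m -> subtree b (g m.+1 (b :: z)).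
Proof. by move=> h; apply: gen_in; exists z. Qed.

Lemma root_cube_cyclic y : root_cube y -> root_cyclic y.
Proof.
apply: gen_min; first exact: gen_subgroup.
by move=> _ ->; apply: (subgroup_gpow (gen_subgroup _)); apply: gen_in.
Qed.

Lemma root_cube_branches y : root_cube y -> branches y.
Proof.
apply: gen_min; first exact: gen_subgroup.
move=> _ ->; rewrite -(g_split HP (eta := [::])) /=; last by lia.
by apply: gen_mul; apply: branches_g => /=; lia.
Qed.

Local Notation root_perm :=
  (nf_perm (gen_subgroup _) (gen_subgroup _) (gen_subgroup _) root_cube_cyclic root_cube_branches).

Definition root_rep n zeta : Sym (nf_space root_cyclic branches root_cube) :=
  if n == m.+1 then
    (if zeta is [::] then root_perm false (g m.+1 [::]) else root_perm true (g m.+1 zeta))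
  else gone.

Lemma root_rep_rels : satisfies_rels root_rep.
Proof.
have Bg zeta : 0 < size zeta <= m -> factor root_cyclic branches true (g m.+1 zeta).
  exact: branches_g.
have rep_cons zeta : zeta != [::] -> root_rep m.+1 zeta = root_perm true (g m.+1 zeta).
  by rewrite /root_rep eqxx; case: zeta.
have rcons_neq0 zeta b : rcons zeta b != [::] by case: zeta.
have rep_other n zeta : n != m.+1 -> root_rep n zeta = gone.
  by rewrite /root_rep => /negbTE ->.
split => [n zeta n0 sz|n zeta sz]; case: (eqVneq n m.+1) => [en|ne];
  try by rewrite !rep_other ?gmul1l ?gpow1g.
all: subst n.
  case: zeta sz => [|c z] sz; first by move: sz => /=; lia.
  rewrite rep_cons // -nf_permX ?(g_leaf3 HP (n := m.+1) (eta := c :: z)) ?nf_perm1 //.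
  by apply: Bg; move: sz => /=; lia.
have Bb b : factor root_cyclic branches true (g m.+1 (rcons zeta b)).
  by apply: Bg; rewrite size_rcons; lia.
rewrite (rep_cons (rcons zeta false)) // (rep_cons (rcons zeta true)) // -nf_permM //.
rewrite (g_split HP (n := m.+1) (eta := zeta)) //; case: zeta sz {Bb} => [|c z] sz.
  by rewrite -nf_perm_core ?nf_permX /root_rep ?eqxx //; apply: gen_in.
by rewrite rep_cons // nf_permX //; apply: Bg; move: sz => /=; lia.
Qed.

Lemma root_amalgam_nf : normal_form root_cyclic branches root_cube.
Proof.
have [rho [hrho erho]] := hom_of_rels HP root_rep_rels.
have rho_root s a : factor root_cyclic branches s a -> rho a = root_perm s a.
  case: s; move: a; apply: (hom_eq_nf_perm_on_gen (k := id)) => //.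
  - by move=> _ [zeta [sz ->]]; rewrite erho /root_rep ?eqxx; [case: zeta sz | split; lia].
  - by move=> _ ->; rewrite erho /root_rep ?eqxx //; split => /=; lia.
exact: (normal_form_of_action (i := id) (fun v w e => e) hrho
         (fun s a v Aa => congr1 (fun p => pf p v) (rho_root s a Aa))).
Qed.

Lemma subtree_trivial b y : trivial y -> subtree b y.
Proof. exact: trivial_gen. Qed.

Local Notation subtree_perm := (nf_perm (gen_subgroup _) (gen_subgroup _)
  (@trivial_subgroup G) (@subtree_trivial false) (@subtree_trivial true)).

Definition subtrees_rep n zeta : Sym (nf_space (subtree false) (subtree true) (@trivial G) * Z3) :=
  if n == m.+1 then
    if zeta is c :: z then lift (subtree_perm c (g m.+1 (c :: z)))
    else croot (gmul (subtree_perm false (g m.+1 [:: false]))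
                     (subtree_perm true (g m.+1 [:: true])))
  else gone.

Lemma subtrees_rep_rels : satisfies_rels subtrees_rep.
Proof.
have LH := @lift_hom (nf_space (subtree false) (subtree true) (@trivial G)).
have Sg c z : size z < m -> factor (subtree false) (subtree true) c (g m.+1 (c :: z)).
  by case: c; apply: subtree_g.
have rep_other n zeta : n != m.+1 -> subtrees_rep n zeta = gone.
  by rewrite /subtrees_rep => /negbTE ->.
have rep_cons c z : subtrees_rep m.+1 (c :: z) = lift (subtree_perm c (g m.+1 (c :: z))).
  by rewrite /subtrees_rep eqxx.
split => [n zeta n0 sz|n zeta sz]; case: (eqVneq n m.+1) => [en|ne];
  try by rewrite !rep_other ?gmul1l ?gpow1g.
all: subst n; case: zeta sz => [|c z] sz; rewrite /= ?size_rcons in sz; try lia.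
- rewrite rep_cons -(homX LH) -nf_permX; last by apply: Sg; lia.
  by rewrite (g_leaf3 HP (n := m.+1) (eta := c :: z)) ?nf_perm1 ?(hom1 LH).
- rewrite -[rcons [::] false]/[:: false] -[rcons [::] true]/[:: true] !rep_cons.
  by rewrite /subtrees_rep eqxx croot3 LH.
- have S0 b : factor (subtree false) (subtree true) c (g m.+1 (c :: rcons z b)).
    by apply: Sg; rewrite size_rcons; lia.
  have Sc : factor (subtree false) (subtree true) c (g m.+1 (c :: z)) by apply: Sg; lia.
  rewrite !rcons_cons !rep_cons -LH -(nf_permM _ _ _ _ _ (S0 false) (S0 true)) -!rcons_cons.
  by rewrite (g_split HP (n := m.+1) (eta := c :: z)) ?(nf_permX _ _ _ _ _ 3 Sc) ?(homX LH) //=; lia.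
Qed.

Lemma subtrees_nf : normal_form (subtree false) (subtree true) (@trivial G).
Proof.
have [rho [hrho erho]] := hom_of_rels HP subtrees_rep_rels.
have rho_subtree s a : factor (subtree false) (subtree true) s a ->
    rho a = lift (subtree_perm s a).
  case: s; move: a; apply: hom_eq_nf_perm_on_gen => //; try exact: lift_hom;
    by move=> _ [z [sz ->]]; rewrite erho /subtrees_rep ?eqxx //; split => /=; lia.
exact: (normal_form_of_action (i := fun v => (v, T0)) (fun v w e => f_equal fst e) hrho
         (fun s a v Aa => congr1 (fun p => pf p (v, T0)) (rho_subtree s a Aa))).
Qed.

Lemma root_gpow_eq1 N : gpow (g m.+1 [::]) N = gone -> N = 0.
Proof.
case: N => // N e; exfalso.
have gc c : g m.+1 [:: c] <> gone by apply: (g_neq1 HP); split => /=; lia.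
have rw : reduced (subtree false) (subtree true) (@trivial G)
            ((false, g m.+1 [:: false]) :: rcons [::] (true, g m.+1 [:: true])).
  split => //; constructor; first by split; [apply: subtree_g | exact: gc].
  by constructor => //; split; [apply: subtree_g | exact: gc].
apply: (cyclically_reduced_gpow_neq1 (@trivial_subgroup G) subtrees_nf rw _ (ltn0Sn N)) => //.
have -> : wprod ((false, g m.+1 [:: false]) :: rcons [::] (true, g m.+1 [:: true])) =
          gpow (g m.+1 [::]) 3.
  by rewrite /= gmul1r; apply: (g_split HP (eta := [::])) => /=; lia.
by rewrite -gpowM mulnC gpowM e gpow1g.
Qed.
End RootAmalgam.

Lemma root_cyclic_torsion (G : Grp) (g : nat -> seq bool -> G) m z :
  is_free_product_of_Pbar g -> 0 < m -> root_cyclic g m z -> torsion z -> z = gone.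
Proof.
move=> HP m0 /gen1_gpow [n ez] [k k0 e].
have nk0 : n * k = 0.
  apply: (root_gpow_eq1 HP m0); rewrite gpowM.
  by case: ez e => ->; rewrite ?gpowV => // /invg_eq1.
have n0 : n = 0 by nia.
by case: ez; rewrite n0 => ->; rewrite ?invg1.
Qed.

Definition levels (G : Grp) (g : nat -> seq bool -> G) M :=
  gen (fun x => exists n eta, [/\ 0 < n <= M, size eta < n & x = g n eta]).

Section Levels.
Variables (G : Grp) (g : nat -> seq bool -> G).
Hypothesis HP : is_free_product_of_Pbar g.
Variable M : nat.

Lemma levels_g n eta : 0 < n <= M -> size eta < n -> levels g M (g n eta).
Proof. by move=> h1 h2; apply: gen_in; exists n, eta. Qed.

Local Notation level_perm := (nf_perm (gen_subgroup _) (gen_subgroup _) (@trivial_subgroup G)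
  (@trivial_gen _ _) (@trivial_gen _ _)).

Definition level_rep n eta : Sym (nf_space (levels g M) (gen (Pgens g M.+1)) (@trivial G)) :=
  if n <= M then level_perm false (g n eta)
  else if n == M.+1 then level_perm true (g n eta) else gone.

Lemma level_rep_rels : satisfies_rels level_rep.
Proof.
have rep_low n eta : n <= M -> level_rep n eta = level_perm false (g n eta).
  by rewrite /level_rep => ->.
have rep_top eta : level_rep M.+1 eta = level_perm true (g M.+1 eta).
  by rewrite /level_rep ltnn eqxx.
have rep_high n eta : M.+1 < n -> level_rep n eta = gone.
  by move=> hn; rewrite /level_rep ifF ?ifF //; apply/negbTE; lia.
split => [n eta n0 sz|n eta sz]; case: (ltngtP n M.+1) => hn.
- rewrite rep_low -?nf_permX ?(g_leaf3 HP) ?nf_perm1 //; try lia.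
  by apply: levels_g; lia.
- by rewrite rep_high ?gpow1g.
- rewrite hn rep_top -nf_permX; last by apply: Pgens_g; lia.
  by rewrite (g_leaf3 HP (n := M.+1)) ?nf_perm1 // -hn.
- have Lb b : factor (levels g M) (gen (Pgens g M.+1)) false (g n (rcons eta b)).
    by apply: levels_g; rewrite ?size_rcons; lia.
  rewrite !rep_low -?(nf_permM _ _ _ _ _ (Lb false) (Lb true)) ?(g_split HP) //; try lia.
  by rewrite nf_permX //; apply: levels_g; lia.
- by rewrite !rep_high ?gmul1l ?gpow1g.
- subst n; have Pb b : factor (levels g M) (gen (Pgens g M.+1)) true (g M.+1 (rcons eta b)).
    by apply: Pgens_g; rewrite size_rcons; lia.
  rewrite !rep_top -(nf_permM _ _ _ _ _ (Pb false) (Pb true)) (g_split HP) //.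
  by rewrite nf_permX //; apply: Pgens_g; lia.
Qed.

Lemma levels_nf : normal_form (levels g M) (gen (Pgens g M.+1)) (@trivial G).
Proof.
have [rho [hrho erho]] := hom_of_rels HP level_rep_rels.
have rho_level s a : factor (levels g M) (gen (Pgens g M.+1)) s a -> rho a = level_perm s a.
  case: s; move: a; apply: (hom_eq_nf_perm_on_gen (k := id)) => //.
  - move=> _ [eta [sz ->]]; rewrite erho ?/level_rep ?ltnn ?eqxx //; split; lia.
  - move=> _ [n [eta [hn sz ->]]]; rewrite erho; last by split; lia.
    by rewrite /level_rep; case: ifP => //; lia.
exact: (normal_form_of_action (i := id) (fun v w e => e) hrho
         (fun s a v Aa => congr1 (fun p => pf p v) (rho_level s a Aa))).
Qed.
End Levels.

Lemma hom_conj_eq1 (G H : Grp) (f : G -> H) (c z : G) :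
  is_hom f -> f z = gone -> f (gmul (ginv c) (gmul z c)) = gone.
Proof. by move=> hf fz; rewrite (homJ hf) fz gmul1l gmulVl. Qed.

Section DownShift.
Variables (G : Grp) (g : nat -> seq bool -> G).
Hypothesis HP : is_free_product_of_Pbar g.
Variable f : G -> G.
Hypothesis hf : is_hom f.
Hypothesis ef : forall n eta, valid_index n eta -> f (g n eta) = down_gen g n eta.

Lemma down_subtree m b (sh sh' : G -> G) : is_hom sh -> is_hom sh' ->
  (forall k zeta, valid_index k zeta -> sh (g k zeta) = subtree_gen g m.+1 b k zeta) ->
  (forall k zeta, valid_index k zeta -> sh' (g k zeta) = subtree_gen g m b k zeta) ->
  forall y, gen (Pgens g m.+1) y -> f (sh y) = sh' (f y).
Proof.
move=> hsh hsh' esh esh'.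
apply: (@hom_eq_on_gen _ _ _ (fun _ => True) (fun y => f (sh y)) (fun y => sh' (f y))) => //.
- exact: hom_comp hsh hf.
- by move=> x y _ _; rewrite hf hsh'.
move=> _ [zeta [sz ->]]; rewrite esh; last by split.
rewrite /subtree_gen eqxx !ef /down_gen /=; try by split => /=; lia.
case: (ltnP (size zeta + 1) m.+1) => h.
  by rewrite ifT ?esh' ?/subtree_gen ?eqxx //; split => /=; lia.
by rewrite ifF ?(hom1 hsh') //; apply/negbTE; lia.
Qed.

Lemma P_torsion_step m : (forall y, gen (Pgens g m.+1) y -> torsion y -> f y = gone) ->
  forall y, gen (Pgens g m.+2) y -> torsion y -> f y = gone.
Proof.
move=> IH y Py ty; have m0 : 0 < m.+1 by [].
have root_split x : Pgens g m.+2 x -> root_cyclic g m.+1 x \/ branches g m.+1 x.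
  by move=> [[|c z] [sz ->]]; [left; apply: gen_in | right; apply: branches_g].
have branch_split x : (exists zeta, 0 < size zeta <= m.+1 /\ x = g m.+2 zeta) ->
    subtree g m.+1 false x \/ subtree g m.+1 true x.
  by move=> [[|[] z] [sz ->]] //=; [right | left]; apply: subtree_g.
have [c [z [[Rz|Bz] tz ->]]] :=
  torsion_gen_conj (gen_subgroup _) (gen_subgroup _) (gen_subgroup _)
    (@root_cube_cyclic G g m.+1) (root_cube_branches HP m0) (root_amalgam_nf HP m0)
    root_split Py ty; apply: hom_conj_eq1 => //.
  by rewrite (root_cyclic_torsion HP m0 Rz tz) (hom1 hf).
have [c' [w [Sw tw ->]]] :=
  torsion_gen_conj (gen_subgroup _) (gen_subgroup _) (@trivial_subgroup G)
    (@subtree_trivial G g m.+1 false) (@subtree_trivial G g m.+1 true)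
    (subtrees_nf HP m0) branch_split Bz tz; apply: hom_conj_eq1 => //.
have [b {}Sw] : exists b, subtree g m.+1 b w by case: Sw; eexists; eassumption.
have [sh [hsh esh]] := subtree_hom_exists HP m.+1 b.
have [sh' [hsh' esh']] := subtree_hom_exists HP m b.
have [w' [Pw' ew]] : exists w', gen (Pgens g m.+1) w' /\ sh w' = w.
  apply: (gen_image hsh _ Sw) => _ [z' [sz ->]]; exists (g m.+1 z'); split; first by exists z'.
  by rewrite esh ?/subtree_gen ?eqxx //; split.
subst w; have tw' : torsion w'.
  have [k k0 e] := tw; exists k => //.
  apply: (subtree_hom_injective HP m0 hsh esh); first exact: (subgroup_gpow (gen_subgroup _)).
  by rewrite (homX hsh) e.
by rewrite (down_subtree hsh hsh' esh esh' Pw') (IH _ Pw' tw') (hom1 hsh').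
Qed.

Lemma P_torsion_down m y : gen (Pgens g m) y -> torsion y -> f y = gone.
Proof.
elim: m y => [|[|m] IH] y Py ty.
- by apply: (hom_trivial_on_gen hf _ Py) => x [zeta []].
- apply: (hom_trivial_on_gen hf _ Py) => x [[|c z] [sz ->]] //.
  by rewrite ef.
- exact: P_torsion_step IH y Py ty.
Qed.

Lemma levels_torsion_down M y : levels g M y -> torsion y -> f y = gone.
Proof.
elim: M y => [|M IH] y Ly ty.
  by apply: (hom_trivial_on_gen hf _ Ly) => x [n [eta [hn _ _]]]; lia.
have level_split x : (exists n eta, [/\ 0 < n <= M.+1, size eta < n & x = g n eta]) ->
    levels g M x \/ gen (Pgens g M.+1) x.
  move=> [n [eta [hn sz ->]]]; case: (ltnP M n) => h; last by left; apply: levels_g; lia.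
  right; have en : n = M.+1 by lia.
  by subst n; apply: Pgens_g.
have [c [z [[Lz|Pz] tz ->]]] :=
  torsion_gen_conj (gen_subgroup _) (gen_subgroup _) (@trivial_subgroup G)
    (@trivial_gen _ _) (@trivial_gen _ _) (levels_nf HP (M := M)) level_split Ly ty.
all: apply: hom_conj_eq1 => //.
- exact: IH Lz tz.
- exact: P_torsion_down Pz tz.
Qed.

Lemma levels_exhaust y : exists M, levels g M y.
Proof.
have levels_mono M M' x : M <= M' -> levels g M x -> levels g M' x.
  by move=> le; apply: gen_mono => _ [n [eta [hn sz ->]]]; exists n, eta; split => //; lia.
elim: (gen_gens HP y) => [_ [n [eta [[n0 sz] ->]]]| |a b _ [M1 h1] _ [M2 h2]|a _ [M1 h1]].
- by exists n; apply: levels_g; lia.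
- by exists 0; apply: gen_one.
- exists (maxn M1 M2); apply: gen_mul.
    by apply: levels_mono h1; apply: leq_maxl.
  by apply: levels_mono h2; apply: leq_maxr.
- by exists M1; apply: gen_inv.
Qed.

Theorem torsion_down y : torsion y -> f y = gone.
Proof. by have [M Ly] := levels_exhaust y; apply: levels_torsion_down Ly. Qed.
End DownShift.

Section NormalClosure.
Variables (G : Grp) (S : G -> Prop).

Lemma normal_closure_normal : normal_subgroup (normal_closure S).
Proof.
split.
- by move=> N [] .
- by move=> x y hx hy N hN hS; case: (hN) => _ h _ _; apply: h; [apply: hx | apply: hy].
- by move=> x hx N hN hS; case: (hN) => _ _ h _; apply: h; apply: hx.
- by move=> x c hx N hN hS; case: (hN) => _ _ _ h; apply: h; apply: hx.
Qed.

Lemma normal_closure_sub x : S x -> normal_closure S x.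
Proof. by move=> Sx N _; apply. Qed.

Lemma normal_closure_min (N : G -> Prop) : normal_subgroup N -> (forall s, S s -> N s) ->
  forall x, normal_closure S x -> N x.
Proof. by move=> hN hS x; apply. Qed.
End NormalClosure.

Section NormalImages.
Variables (G H : Grp) (f : G -> H).
Hypothesis hf : is_hom f.

Lemma hom_preimage_normal (N : H -> Prop) : normal_subgroup N -> normal_subgroup (fun x => N (f x)).
Proof.
case=> N1 NM NV NJ; split.
- by rewrite (hom1 hf).
- by move=> x y Nx Ny; rewrite hf; apply: NM.
- by move=> x Nx; rewrite (homV hf); apply: NV.
- by move=> x c Nx; rewrite (homJ hf); apply: NJ.
Qed.

Lemma hom_image_normal (N : G -> Prop) : (forall y, exists x, f x = y) ->
  normal_subgroup N -> normal_subgroup (fun y => exists2 x, N x & f x = y).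
Proof.
move=> surj [N1 NM NV NJ]; split.
- by exists gone; rewrite ?(hom1 hf).
- by move=> _ _ [x Nx <-] [y Ny <-]; exists (gmul x y); rewrite ?hf //; apply: NM.
- by move=> _ [x Nx <-]; exists (ginv x); rewrite ?(homV hf) //; apply: NV.
- move=> _ d [x Nx <-]; have [c <-] := surj d.
  by exists (gmul (ginv c) (gmul x c)); rewrite ?(homJ hf) //; apply: NJ.
Qed.
End NormalImages.

Lemma Tor_gone (G : Grp) i : @Tor G i gone.
Proof. by case: i => [//|i] N []. Qed.

Lemma Tor1_torsion (G : Grp) (x : G) : torsion x -> @Tor G 1 x.
Proof. by move=> [k k0 e]; apply: normal_closure_sub; exists k. Qed.

Lemma Tor1_subset (G : Grp) i (x : G) : @Tor G 1 x -> @Tor G i.+1 x.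
Proof.
have nT : normal_subgroup (@Tor G i.+1) := normal_closure_normal _.
have gen_sub (s : G) : (exists k, 0 < k /\ @Tor G 0 (gpow s k)) -> @Tor G i.+1 s.
  move=> [k [k0 ek]]; apply: normal_closure_sub; exists k; split => //.
  by rewrite ek; apply: Tor_gone.
exact: normal_closure_min nT gen_sub x.
Qed.

Section TorPreimage.
Variables (G H : Grp) (f : G -> H).
Hypotheses (hf : is_hom f) (surj : forall y, exists x, f x = y).
Hypothesis ker : forall x, f x = gone <-> @Tor G 1 x.

Lemma Tor_preimage i x : @Tor G i.+1 x <-> @Tor H i (f x).
Proof.
elim: i x => [|i IH] x; first by rewrite -ker.
have gens u : (exists k, 0 < k /\ @Tor G i.+1 (gpow u k)) <->
              (exists k, 0 < k /\ @Tor H i (gpow (f u) k)).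
  split=> -[k [k0 hk]]; exists k; split => //.
    by rewrite -(homX hf); apply/IH.
  by apply/IH; rewrite (homX hf).
split=> hx.
  have nP : normal_subgroup (fun y => @Tor H i.+1 (f y)).
    exact: (hom_preimage_normal hf (normal_closure_normal _)).
  have gen_sub u : (exists k, 0 < k /\ @Tor G i.+1 (gpow u k)) -> @Tor H i.+1 (f u).
    by move=> /gens hu; apply: normal_closure_sub.
  exact: (normal_closure_min nP gen_sub hx).
have [u Tu fu] : exists2 u, @Tor G i.+2 u & f u = f x.
  have nI : normal_subgroup (fun y => exists2 u, @Tor G i.+2 u & f u = y).
    exact: (hom_image_normal hf surj (normal_closure_normal _)).
  have gen_sub v : (exists k, 0 < k /\ @Tor H i (gpow v k)) ->
      exists2 u, @Tor G i.+2 u & f u = v.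
    move=> hv; have [u eu] := surj v; exists u => //.
    by apply: normal_closure_sub; apply/gens; rewrite eu.
  exact: (normal_closure_min nI gen_sub hx).
have Txu : @Tor G i.+2 (gmul x (ginv u)).
  by apply: (Tor1_subset (i := i.+1)); apply/ker; rewrite hf (homV hf) fu gmulVr.
have [_ TM _ _] : normal_subgroup (@Tor G i.+2) := normal_closure_normal _.
by rewrite -(mulgKV u x); apply: TM.
Qed.

End TorPreimage.

(* Pulling [Tor_(n+1) = Tor_n] back [n] times along the isomorphism gives
   [Tor_1 = Tor_0]. *)
Lemma TorLen_infinite_of_iso (G : Grp) (f : G -> G) : is_hom f ->
  (forall y, exists x, f x = y) -> (forall x, f x = gone <-> @Tor G 1 x) ->
  (exists2 x : G, torsion x & x <> gone) -> TorLen_infinite G.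
Proof.
move=> hf surj ker [x tx nx] n stable; apply: nx.
suff: forall y, @Tor G 1 y -> @Tor G 0 y by apply; exact: Tor1_torsion.
have: forall y, @Tor G n.+1 y -> @Tor G n y by move=> y hy; apply/stable; exists n.+1.
elim: n {stable} => [//|n IH] hn; apply: IH => y hy; have [z ez] := surj y; subst y.
apply/(Tor_preimage hf surj ker n z); apply: hn.
by apply/(Tor_preimage hf surj ker n.+1 z).
Qed.

(* [G / N] realised without quotient types: [G] permutes the subsets of [G]
   saturated under right multiplication by [N], and [N] acts trivially. *)
Section SaturatedSets.
Variables (G : Grp) (N : G -> Prop).
Hypothesis nN : normal_subgroup N.

Definition saturated (S : G -> Prop) := forall z k, N k -> (S (gmul z k) <-> S z).
Definition saturated_set := {S : G -> Prop | saturated S}.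

Definition translate (x : G) (S : G -> Prop) := fun z => S (gmul (ginv x) z).

Lemma translate_saturated x S : saturated S -> saturated (translate x S).
Proof. by move=> hS z k hk; rewrite /translate gmulA; apply: hS. Qed.

Definition translate_set x (s : saturated_set) : saturated_set :=
  exist _ (translate x (proj1_sig s)) (translate_saturated x (proj2_sig s)).

Lemma translate_setM x y s : translate_set x (translate_set y s) = translate_set (gmul x y) s.
Proof.
by apply: sig_ext; apply: functional_extensionality => z; rewrite /= /translate invMg gmulA.
Qed.

Lemma translate_set1 s : translate_set gone s = s.
Proof.
by apply: sig_ext; apply: functional_extensionality => z; rewrite /= /translate invg1 gmul1l.
Qed.

Definition translate_perm (x : G) : Sym saturated_set.
Proof.
refine (@Perm _ (translate_set x) (translate_set (ginv x)) _ _) => s.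
- by rewrite translate_setM gmulVr translate_set1.
- by rewrite translate_setM gmulVl translate_set1.
Defined.

Lemma translate_perm_hom : is_hom translate_perm.
Proof. by move=> x y; apply: perm_ext => s /=; rewrite translate_setM. Qed.

Lemma translate_perm_normal u : N u -> translate_perm u = gone.
Proof.
case: nN => _ _ NV NJ Nu; apply: perm_ext => -[S hS]; apply: sig_ext => /=.
apply: functional_extensionality => z; apply: propositional_extensionality.
rewrite /translate -[gmul (ginv u) z](mulKVg z).
by apply: hS; apply: NJ; apply: NV.
Qed.

Lemma translate_perm_eq1 y : translate_perm y = gone -> N y.
Proof.
case: (nN) => N1 NM NV _ e.
have satN : saturated N.
  move=> z k Nk; split => [Nzk|Nz]; last exact: NM _ _ Nz Nk.
  by rewrite -(mulgK k z); apply: NM _ _ Nzk (NV _ Nk).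
have := f_equal (fun p => proj1_sig (pf p (exist _ N satN))) e => /= /(f_equal (fun S => S y)).
by rewrite /translate gmulVl => <-.
Qed.
End SaturatedSets.

Section DownShiftIso.
Variables (G : Grp) (g : nat -> seq bool -> G).
Hypothesis HP : is_free_product_of_Pbar g.
Variable f : G -> G.
Hypothesis hf : is_hom f.
Hypothesis ef : forall n eta, valid_index n eta -> f (g n eta) = down_gen g n eta.

Lemma down_surjective y : exists x, f x = y.
Proof.
have img : is_subgroup (fun y => exists x, f x = y).
  split.
  - by exists gone; apply: hom1.
  - by move=> _ _ [u <-] [v <-]; exists (gmul u v); rewrite hf.
  - by move=> _ [u <-]; exists (ginv u); rewrite (homV hf).
apply: (gen_min img _ (gen_gens HP y)) => _ [n [eta [[n0 sz] ->]]].
exists (g n.+1 eta); rewrite ef /down_gen; last by split; lia.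
by case: ifP => //; lia.
Qed.

(* Modulo [Tor_1] the leaves die, so [x_(n, eta) -> x_(n+1, eta)] induces a
   homomorphism back from [G]; it is a left inverse of [f] modulo [Tor_1]. *)
Lemma down_kernel_sub y : f y = gone -> @Tor G 1 y.
Proof.
have nN : normal_subgroup (@Tor G 1) := normal_closure_normal _.
have leaf n eta : 0 < n -> size eta = n.-1 -> @Tor G 1 (g n eta).
  by move=> n0 sz; apply: Tor1_torsion; exists 3 => //; apply: (g_leaf3 HP).
pose pi := translate_perm (@Tor G 1).
have rels : satisfies_rels (fun n eta => pi (g n.+1 eta)).
  split => [n eta n0 sz|n eta sz].
    rewrite -(homX (translate_perm_hom (@Tor G 1))) -(g_split HP); last by lia.
    have [_ NM _ _] := nN.
    by apply: (translate_perm_normal nN); apply: NM; apply: leaf; rewrite ?size_rcons //=; lia.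
  by rewrite -(translate_perm_hom (@Tor G 1)) (g_split HP) ?(homX (translate_perm_hom (@Tor G 1))) //; lia.
have [psi [hpsi epsi]] := hom_of_rels HP rels.
have psi_f : forall y, psi (f y) = pi y.
  apply: (hom_eq_on_gens HP (hom_comp hf hpsi) (translate_perm_hom (@Tor G 1))) => n eta [n0 sz].
  rewrite ef /down_gen //; case: ifP => hh.
    by rewrite epsi ?prednK //; split; lia.
  by rewrite (hom1 hpsi) (translate_perm_normal nN) //; apply: leaf => //; lia.
by move=> fy; apply: (translate_perm_eq1 nN); rewrite -/pi -psi_f fy (hom1 hpsi).
Qed.

Lemma down_kernel x : f x = gone <-> @Tor G 1 x.
Proof.
split; first exact: down_kernel_sub.
have nK : normal_subgroup (fun x => f x = gone).
  split.
  - exact: hom1.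
  - by move=> a b ha hb; rewrite hf ha hb gmul1l.
  - by move=> a ha; rewrite (homV hf) ha invg1.
  - by move=> a c ha; apply: hom_conj_eq1.
have gen_sub s : (exists k, 0 < k /\ gpow s k = gone) -> f s = gone.
  by move=> [k [k0 ek]]; apply: (torsion_down HP hf ef); exists k.
exact: normal_closure_min nK gen_sub x.
Qed.
End DownShiftIso.

Unset Implicit Arguments.
Theorem lemma6p1 (G : Grp) (g : nat -> seq bool -> G) :
  @is_free_product_of_Pbar G g ->
  quotient_iso (@Tor G 1) G /\ TorLen_infinite G.
Proof.
move=> HP; have [f [hf ef]] := down_hom_exists HP.
have surj := down_surjective HP hf ef.
have ker := down_kernel HP hf ef.
split; first by exists f.
apply: (TorLen_infinite_of_iso hf surj ker); exists (g 1 [::]).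
  by exists 3 => //; apply: (g_leaf3 HP).
by apply: (g_neq1 HP).
Qed.
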